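(* Let $K$ be a field, $S=K[x_1,\ldots,x_n]$, $I\subset S$ a monomial ideal with $I\ne S$ and $G(I)=\{x^{a_1},\ldots,x^{a_m}\}$. Let $T$ be the polynomial ring over $K$ in variables $x_{l1},\ldots,x_{lm_l}$, $l=1,\ldots,n$, $T_l=K[x_{l1},\ldots,x_{lm_l}]$, and let $\mathfrak{n}$ be the graded maximal ideal of $T$. For $l=1,\ldots,n$, $j=1,\ldots,m$ let $L_{l,a_j(l)}\subset T_l$ be monomial ideals with $L_{l,a_j(l)}\subset L_{l,a_k(l)}$ whenever $a_j(l)\ge a_k(l)$, each having an $a_j(l)$-linear resolution, and let $L_j=\prod_{l=1}^nL_{l,a_j(l)}\subset T$. Let $\mathbb{F}^*$ be the complex of $L_1,\ldots,L_m$ induced by $I$ with differential $\partial^*$. Then $\partial^*(F_i^* )\subset\mathfrak{n}F^*_{i-1}$ for all $i>0$.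
   Context: For $a\in\mathbb{N}^n$, $x^a=x_1^{a(1)}\cdots x_n^{a(n)}$; $G(I)$ is the minimal monomial generating set. An ideal has a $d$-linear resolution if it is generated in degree $d$ and its minimal graded free resolution is linear. Let $0\to F_p\to\cdots\to F_1\to F_0\to S/I\to 0$ be the $\mathbb{Z}^n$-graded minimal free resolution of $S/I$ with differential $\partial$, where $F_0=S$ with basis $f_{01}$ of degree $0$, and $F_i=\bigoplus_{j=1}^{\beta_i}Sf_{ij}$ with $f_{ij}$ homogeneous of multidegree $a_{ij}\in\mathbb{N}^n$; here $\beta_1=m$, $a_{1j}=a_j$, $\partial(f_{1j})=x^{a_j}f_{01}$. Write $\partial(f_{ij})=\sum_k\lambda^{(i)}_{kj}x^{a_{ij}-a_{i-1,k}}f_{i-1,k}$ with $\lambda^{(i)}_{kj}\in K$, where $\lambda^{(i)}_{kj}=0$ whenever $a_{ij}-a_{i-1,k}\notin\mathbb{N}^n$; $\lambda^{(i)}=(\lambda^{(i)}_{kj})$. The complex $\mathbb{F}^*$ has $F^*_0=T$, $F^*_i=\bigoplus_{j=1}^{\beta_i}L_{ij}$ for $1\le i\le p$, where $L_{1j}=L_j$ and for $i\ge2$, $L_{ij}=\bigcap_{k:\lambda^{(i)}_{kj}\ne0}L_{i-1,k}$; $\partial^*:F^*_i\to F^*_{i-1}$ sends a column vector $u$ with $u_j\in L_{ij}$ to $\lambda^{(i)}u$. *)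

From HB Require Import structures.
From mathcomp Require Import all_boot all_order all_algebra.
From mathcomp Require Import mpoly.
Set Implicit Arguments. Unset Strict Implicit. Unset Printing Implicit Defensive.
Import Order.TTheory GRing.Theory.
Local Open Scope ring_scope.

Section Ideals.
Variable R : comNzRingType.

Definition ideal_span (P : R -> Prop) : R -> Prop :=
  fun f => exists s : seq (R * R),
    (forall x, x \in s -> P x.2) /\ f = \sum_(x <- s) x.1 * x.2.

Definition ideal_mul (I J : R -> Prop) : R -> Prop :=
  ideal_span (fun f => exists a b, I a /\ J b /\ f = a * b).

Definition ideal_subset (I J : R -> Prop) : Prop := forall f, I f -> J f.
End Ideals.

Definition monomial_ideal (K : fieldType) (r : nat) (G : seq 'X_{1..r})
  : {mpoly K[r]} -> Prop :=
  ideal_span (fun f => exists2 mu, mu \in G & f = 'X_[mu]).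

Definition graded_max (K : fieldType) (r : nat) : {mpoly K[r]} -> Prop :=
  ideal_span (fun f => exists i : 'I_r, f = 'X_i).

(* J has a d-linear resolution (standard grading): J is generated by
   homogeneous polynomials of degree d (the entries of g) and there is a
   finite graded free resolution
     0 -> F_{p} -> ... -> F_1 -> F_0 -g-> J -> 0,  F_i = R^(b i),
   whose differentials M i : F_(i+1) -> F_i are matrices of linear forms
   (hence the resolution is minimal and F_i is generated in degree d+i). *)
Definition has_linear_resolution (K : fieldType) (r : nat) (d : nat)
  (J : {mpoly K[r]} -> Prop) : Prop :=
  exists (p : nat) (b : nat -> nat) (g : 'rV[{mpoly K[r]}]_(b 0))
         (M : forall i : nat, 'M[{mpoly K[r]}]_(b i, b i.+1)),
    (forall k, g 0 k \is d.-homog) /\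
    (forall i k j, M i k j \is 1.-homog) /\
    (forall f, J f <-> exists v : 'cV[{mpoly K[r]}]_(b 0), f = (g *m v) 0 0) /\
    (g *m M 0 = 0) /\ (forall i, M i *m M i.+1 = 0) /\
    (forall v : 'cV[{mpoly K[r]}]_(b 0), g *m v = 0 ->
       exists w, v = M 0 *m w) /\
    (forall i (v : 'cV[{mpoly K[r]}]_(b i.+1)), M i *m v = 0 ->
       exists w, v = M i.+1 *m w) /\
    (forall i, (p <= i)%N -> b i.+1 = 0%N).

(* Differential of a Z^n-graded free complex given by multidegrees deg and
   scalars lam: d(f_ij) = sum_k lam_kj x^(deg_ij - deg_(i-1)k) f_(i-1)k. *)
Definition zn_differential (K : fieldType) (n : nat) (beta : nat -> nat)
  (deg : forall i : nat, 'I_(beta i) -> 'X_{1..n})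
  (lam : forall i : nat, 'M[K]_(beta i.-1, beta i)) (i : nat)
  : 'M[{mpoly K[n]}]_(beta i.-1, beta i) :=
  \matrix_(k, j) ((lam i k j)%:MP *
     'X_[[multinom (deg i j l - deg i.-1 k l)%N | l < n]]).

(* The Z^n-graded minimal free resolution of S/I, where G(I) = {x^(a j)},
   in the normalized form of the paper:
   F_0 = S with basis of degree 0, F_1 with basis of degrees a_j and
   d(f_1j) = x^(a_j) f_01, differentials in the above form,
   lam_kj = 0 unless deg_(i-1)k <= deg_ij, exact, of length p, minimal. *)
Definition is_min_zn_resolution (K : fieldType) (n m : nat)
  (a : 'I_m -> 'X_{1..n}) (p : nat) (beta : nat -> nat)
  (deg : forall i : nat, 'I_(beta i) -> 'X_{1..n})
  (lam : forall i : nat, 'M[K]_(beta i.-1, beta i)) : Prop :=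
  let D := zn_differential deg lam in
  (beta 0 = 1%N /\ forall k, deg 0 k = 0%MM) /\
  (exists hm : beta 1 = m, forall j, deg 1 j = a (cast_ord hm j)) /\
  (forall k j, lam 1 k j = 1) /\
  (forall i k j, lam i k j != 0 -> (deg i.-1 k <= deg i j)%MM) /\
  (* minimality: all entries of the differentials lie in the maximal ideal *)
  (forall i k j, (1 <= i)%N -> lam i k j != 0 -> deg i.-1 k != deg i j) /\
  (forall i, (1 <= i)%N -> D i *m D i.+1 = 0) /\
  (* exactness at F_i, i >= 1 (the cokernel of D 1 is S/I by construction) *)
  (forall i (v : 'cV[{mpoly K[n]}]_(beta i)), (1 <= i)%N ->
     D i *m v = 0 -> exists w, v = D i.+1 *m w) /\
  (forall i, (p < i)%N -> beta i = 0%N).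

(* The variables of T: x_{l k}, l < n, k < m_l, enumerated as 'I_N. *)
Definition Tvars (n : nat) (ml : 'I_n -> nat) : finType :=
  {l : 'I_n & 'I_(ml l)}.
Definition Tsize (n : nat) (ml : 'I_n -> nat) : nat := #|Tvars ml|.
Definition Tvar (n : nat) (ml : 'I_n -> nat) (l : 'I_n) (k : 'I_(ml l))
  : 'I_(Tsize ml) := enum_rank (Tagged (fun l => 'I_(ml l)) k : Tvars ml).

Definition Temb (K : fieldType) (n : nat) (ml : 'I_n -> nat) (l : 'I_n)
  (f : {mpoly K[ml l]}) : {mpoly K[Tsize ml]} :=
  f \mPo [tuple 'X_(Tvar k) | k < ml l].

Definition Text (K : fieldType) (n : nat) (ml : 'I_n -> nat) (l : 'I_n)
  (J : {mpoly K[ml l]} -> Prop) : {mpoly K[Tsize ml]} -> Prop :=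
  ideal_span (fun f => exists2 g, J g & f = Temb g).

Definition Lideal (K : fieldType) (n : nat) (ml : 'I_n -> nat)
  (Lg : forall l : 'I_n, nat -> seq 'X_{1..ml l}) (l : 'I_n) (d : nat) :=
  @monomial_ideal K (ml l) (Lg l d).

Definition Lprod (K : fieldType) (n : nat) (ml : 'I_n -> nat)
  (Lg : forall l : 'I_n, nat -> seq 'X_{1..ml l}) (a : 'X_{1..n})
  : {mpoly K[Tsize ml]} -> Prop :=
  foldr (fun l acc => ideal_mul (Text (@Lideal K n ml Lg l (a l))) acc)
        (fun _ => True) (enum 'I_n).

(* The ideals L_ij of the complex F^*: L_0 = T, L_1j = L_j,
   L_ij = intersection of L_(i-1)k over k with lam^(i)_kj != 0. *)
Fixpoint Lcx_pos (K : fieldType) (n : nat) (ml : 'I_n -> nat)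
  (Lg : forall l : 'I_n, nat -> seq 'X_{1..ml l}) (beta : nat -> nat)
  (deg : forall i : nat, 'I_(beta i) -> 'X_{1..n})
  (lam : forall i : nat, 'M[K]_(beta i.-1, beta i)) (i : nat)
  : 'I_(beta i.+1) -> {mpoly K[Tsize ml]} -> Prop :=
  match i as i0 return 'I_(beta i0.+1) -> {mpoly K[Tsize ml]} -> Prop with
  | 0 => fun j => @Lprod K n ml Lg (deg 1%N j)
  | i1.+1 => fun j f =>
      forall k : 'I_(beta i1.+1), lam i1.+2 k j != 0 ->
        @Lcx_pos K n ml Lg beta deg lam i1 k f
  end.

Definition Lcx (K : fieldType) (n : nat) (ml : 'I_n -> nat)
  (Lg : forall l : 'I_n, nat -> seq 'X_{1..ml l}) (beta : nat -> nat)
  (deg : forall i : nat, 'I_(beta i) -> 'X_{1..n})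
  (lam : forall i : nat, 'M[K]_(beta i.-1, beta i)) (i : nat)
  : 'I_(beta i) -> {mpoly K[Tsize ml]} -> Prop :=
  match i as i0 return 'I_(beta i0) -> {mpoly K[Tsize ml]} -> Prop with
  | 0 => fun _ _ => True
  | i1.+1 => @Lcx_pos K n ml Lg beta deg lam i1
  end.

(* By induction along the resolution, deg_ij is the lcm of the a_j' over the
   generators j' under f_ij (a larger degree would let exactness produce a
   boundary with a unit entry, against minimality), while L_ij is the
   intersection of the corresponding L_j'.  If lam^(i)_kj <> 0, minimality
   gives a coordinate l with deg_{i-1,k}(l) < deg_ij(l), i.e. a generator a_j0
   under f_ij whose l-th entry exceeds a_j'(l) for every j' under f_{i-1,k}.
   For a monomial x^mu of an element of L_ij, the l-th block of mu lies in
   L_{l,a_j0(l)}, and the linear resolution of the L_{l,d} allows one to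
   divide it by a variable while staying in L_{l,a_j'(l)} for all those j'.
   So every monomial of L_ij is a variable times an element of L_{i-1,k}. *)

From HB Require Import structures.
From mathcomp Require Import all_boot all_order all_algebra.
From mathcomp Require Import mpoly.
From mathcomp Require Import zify.
Import GRing.Theory.
Local Open Scope ring_scope.
Set Implicit Arguments. Unset Strict Implicit. Unset Printing Implicit Defensive.

Section IdealSpan.
Variable R : comNzRingType.

Definition is_ideal (P : R -> Prop) :=
  [/\ P 0, (forall x y, P x -> P y -> P (x + y)) & (forall c x, P x -> P (c * x))].

Lemma ideal_span_is_ideal (Q : R -> Prop) : is_ideal (ideal_span Q).
Proof.
split.
- by exists [::]; split => //; rewrite big_nil.
- move=> x y [s [hs ->]] [t [ht ->]]; exists (s ++ t); split; last by rewrite big_cat.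
  by move=> z; rewrite mem_cat => /orP[/hs|/ht].
- move=> c x [s [hs ->]]; exists [seq (c * z.1, z.2) | z <- s]; split.
    by move=> z /mapP[w /hs hw ->].
  by rewrite big_map mulr_sumr; apply: eq_bigr => z _; rewrite mulrA.
Qed.

Lemma mem_ideal_span (Q : R -> Prop) f : Q f -> ideal_span Q f.
Proof.
move=> hf; exists [:: (1, f)]; rewrite big_seq1 mul1r; split=> // z.
by rewrite inE => /eqP ->.
Qed.

Lemma ideal_span_min (Q P : R -> Prop) : is_ideal P -> (forall f, Q f -> P f) ->
  forall f, ideal_span Q f -> P f.
Proof.
case=> P0 PD PM hQ f [s [hs ->]]; elim: s hs => [|z s ih] hs; first by rewrite big_nil.
rewrite big_cons; apply: PD; last by apply: ih => w hw; apply: hs; rewrite inE hw orbT.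
by apply/PM/hQ/hs; rewrite inE eqxx.
Qed.

Lemma is_ideal_sum (P : R -> Prop) (I : Type) (r : seq I) (p : pred I) (F : I -> R) :
  is_ideal P -> (forall i, p i -> P (F i)) -> P (\sum_(i <- r | p i) F i).
Proof. by case=> P0 PD _ hF; apply: big_ind. Qed.

Lemma mem_ideal_mul (I J : R -> Prop) x y : I x -> J y -> ideal_mul I J (x * y).
Proof. by move=> hx hy; apply: mem_ideal_span; exists x, y. Qed.
End IdealSpan.

Section MonomialSupport.
Variable K : fieldType.

Lemma mpolyX_neq0 n (e : 'X_{1..n}) : ('X_[e] : {mpoly K[n]}) != 0.
Proof.
apply/eqP => /(congr1 (mcoeff e)); rewrite mcoeffX eqxx mcoeff0 => /eqP.
by rewrite oner_eq0.
Qed.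

Lemma mcoeffM_neq0 n (p q : {mpoly K[n]}) m : (p * q)@_m != 0 ->
  exists m1 m2, [/\ p@_m1 != 0, q@_m2 != 0 & m = (m1 + m2)%MM].
Proof.
rewrite mcoeff_eq0 negbK => /msuppM_le /allpairsP [[m1 m2] /= [h1 h2 ->]].
by exists m1, m2; rewrite !mcoeff_eq0 h1 h2.
Qed.

Lemma mcoeff0_mulX n (e : 'X_{1..n}) (q : {mpoly K[n]}) :
  e != 0%MM -> ('X_[e] * q)@_0%MM = 0.
Proof.
move=> ne; apply/eqP; apply: contraT => /mcoeffM_neq0 [m1 [m2 [h1 _ e0]]].
move: h1; rewrite mcoeffX; have [em|] := eqVneq e m1; last by rewrite eqxx.
move=> _; subst m1; case/negP: ne; apply/eqP/mnmP => i.
by move/mnmP: e0 => /(_ i); rewrite mnmDE !mnm0E; lia.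
Qed.

Lemma is_ideal_supp n r (h : 'X_{1..n} -> 'X_{1..r}) (J : {mpoly K[r]} -> Prop) :
  is_ideal J -> (forall m1 m2, h (m1 + m2)%MM = (h m1 + h m2)%MM) ->
  is_ideal (fun f : {mpoly K[n]} => forall m, f@_m != 0 -> J 'X_[h m]).
Proof.
move=> [J0 JD JM] hD; split.
- by move=> m; rewrite mcoeff0 eqxx.
- move=> x y hx hy m; rewrite mcoeffD.
  have [/hx //|/negbNE/eqP x0] := boolP (x@_m != 0).
  by rewrite x0 add0r => /hy.
- move=> c x hx m /mcoeffM_neq0 [m1 [m2 [_ h2 ->]]].
  by rewrite hD mpolyXD; apply/JM/hx.
Qed.

Lemma monomial_ideal_supp n (G : seq 'X_{1..n}) (f : {mpoly K[n]}) m :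
  @monomial_ideal K n G f -> f@_m != 0 -> @monomial_ideal K n G 'X_[m].
Proof.
move=> hf; move: m.
apply: (ideal_span_min (is_ideal_supp (h := id) (ideal_span_is_ideal _) _)) hf => //.
move=> g [mu hmu ->] m; rewrite mcoeffX; have [<-|ne] := eqVneq mu m; last by rewrite eqxx.
by move=> _; apply: mem_ideal_span; exists mu.
Qed.

Lemma ideal_mul_graded_max n (J : {mpoly K[n]} -> Prop) f :
  (forall mu, f@_mu != 0 -> exists v, (0 < mu v)%N /\ J 'X_[mu - U_(v)]) ->
  ideal_mul (@graded_max K n) J f.
Proof.
move=> hf; rewrite [f]mpolyE big_seq.
apply: is_ideal_sum (ideal_span_is_ideal _) _ => mu.
rewrite mcoeff_msupp => /hf [v [hv hJ]].
have [_ _ idM] :=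
  ideal_span_is_ideal (fun g => exists x y, graded_max x /\ J y /\ g = x * y).
rewrite -mul_mpolyC; apply: idM.
have -> : mu = (U_(v) + (mu - U_(v)))%MM by rewrite addmC submK // lep1mP -lt0n.
by rewrite mpolyXD; apply: mem_ideal_mul => //; apply: mem_ideal_span; exists v.
Qed.
End MonomialSupport.

Lemma mdeg_gt0 r (nu : 'X_{1..r}) : (0 < mdeg nu)%N -> exists x, (0 < nu x)%N.
Proof.
rewrite mdegE => h; apply/existsP; move: h; apply: contraLR.
rewrite negb_exists => /forallP hF; rewrite -leqNgt leqn0 sum_nat_eq0.
by apply/forallP => i; have := hF i; rewrite lt0n negbK.
Qed.

Section LinearResolution.
Variables (K : fieldType) (r d : nat) (G : seq 'X_{1..r}).
Local Notation J := (@monomial_ideal K r G).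
Hypothesis linJ : has_linear_resolution d J.

Lemma linear_resolution_split nu : J 'X_[nu] ->
  exists al be, [/\ nu = (al + be)%MM, mdeg al = d & J 'X_[al]].
Proof.
case: linJ => [p [b [g [M [hg [_ [hJ _]]]]]]] /hJ [v hv].
have [k hk] : exists k, (g 0 k * v k 0)@_nu != 0.
  apply/existsP; apply: contraT; rewrite negb_exists => /forallP h0.
  have : ('X_[nu] : {mpoly K[r]})@_nu != 0 by rewrite mcoeffX eqxx oner_neq0.
  rewrite hv mxE raddf_sum /= big1 ?eqxx // => k _.
  by apply/eqP; rewrite -[_ == 0]negbK h0.
have [m1 [m2 [h1 _ ->]]] := mcoeffM_neq0 hk; exists m1, m2; split => //.
  by apply: (dhomog_mf (hg k)); rewrite mcoeff_msupp.
apply: (monomial_ideal_supp _ h1); apply/hJ.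
exists (\col_t (t == k)%:R); rewrite mxE (bigD1 k) //= big1 => [|t /negbTE ne].
  by rewrite mxE eqxx mulr1 addr0.
by rewrite mxE ne mulr0.
Qed.

Lemma linear_resolution_mdeg nu : J 'X_[nu] -> (d <= mdeg nu)%N.
Proof.
by case/linear_resolution_split=> [al [be [-> <- _]]]; rewrite mdegD leq_addr.
Qed.

Lemma linear_resolution_divide nu : (d < mdeg nu)%N -> J 'X_[nu] ->
  exists x, (0 < nu x)%N /\ J 'X_[nu - U_(x)].
Proof.
move=> hd /linear_resolution_split [al [be [nuE hal hJ]]].
have: (0 < mdeg be)%N by move: hd; rewrite nuE mdegD hal -{1}(addn0 d) ltn_add2l.
case/mdeg_gt0=> x hx; exists x; split; first by rewrite nuE mnmDE ltn_addl.
have ->: (nu - U_(x) = be - U_(x) + al)%MM.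
  apply/mnmP => i; rewrite nuE !(mnmBE, mnmDE) mnm1E.
  by case: eqP => [<-|_]; [move: hx; lia | rewrite !subn0 addnC].
have [_ _ JM] : is_ideal J := ideal_span_is_ideal _.
by rewrite mpolyXD; apply: JM.
Qed.
End LinearResolution.

Section Blocks.
Variables (n : nat) (ml : 'I_n -> nat).
Local Notation N := (Tsize ml).

Definition mnm_block (l : 'I_n) (mu : 'X_{1..N}) : 'X_{1..ml l} :=
  [multinom mu (@Tvar n ml l k) | k < ml l].
Definition mnm_embed (l : 'I_n) (mu : 'X_{1..ml l}) : 'X_{1..N} :=
  [multinom (\sum_(k < ml l | @Tvar n ml l k == v) mu k)%N | v < N].
Arguments mnm_embed : clear implicits.

Lemma Tvar_tag l l' (k : 'I_(ml l)) (k' : 'I_(ml l')) :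
  @Tvar n ml l k = @Tvar n ml l' k' -> l = l'.
Proof. by rewrite /Tvar => /enum_rank_inj /(congr1 tag). Qed.

Lemma Tvar_eq l (k k' : 'I_(ml l)) : (@Tvar n ml l k == Tvar k') = (k == k').
Proof. by rewrite /Tvar (inj_eq enum_rank_inj) eq_Tagged. Qed.

Lemma mnm_blockD l m1 m2 :
  mnm_block l (m1 + m2)%MM = (mnm_block l m1 + mnm_block l m2)%MM.
Proof. by apply/mnmP => k; rewrite !(mnmE, mnmDE). Qed.

Lemma mnm_embedK l : cancel (mnm_embed l) (mnm_block l).
Proof.
move=> mu; apply/mnmP => k; rewrite !mnmE (eq_bigl (pred1 k)) ?big_pred1_eq // => k'.
by rewrite /= Tvar_eq.
Qed.

Lemma mnm_block_sub1 l (mu : 'X_{1..N}) (x : 'I_(ml l)) :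
  mnm_block l (mu - U_(Tvar x))%MM = (mnm_block l mu - U_(x))%MM.
Proof. by apply/mnmP => k; rewrite !(mnmE, mnmBE) Tvar_eq. Qed.

Lemma mnm_block_sub1_other l l' (mu : 'X_{1..N}) (x : 'I_(ml l)) : l' != l ->
  mnm_block l' (mu - U_(Tvar x))%MM = mnm_block l' mu.
Proof.
move=> ne; apply/mnmP => k; rewrite !(mnmE, mnmBE).
by case: eqP => [/Tvar_tag e|]; [rewrite e eqxx in ne | rewrite subn0].
Qed.

Lemma sum_mnm_embed_block (mu : 'X_{1..N}) :
  (\big[+%MM/0%MM]_(l <- enum 'I_n) mnm_embed l (mnm_block l mu))%MM = mu.
Proof.
apply/mnmP => v; rewrite mnm_sumE.
have [[l0 k0] ->] : exists p, v = enum_rank p by exists (enum_val v); rewrite enum_valK.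
rewrite (bigD1_seq l0) ?mem_enum ?enum_uniq //= big1_seq => [|l /andP[ne _]].
  rewrite !mnmE (eq_bigl (pred1 k0)) ?big_pred1_eq ?addn0 ?mnmE //.
  by move=> k /=; rewrite Tvar_eq.
by rewrite mnmE big1 // => k /eqP /Tvar_tag e; rewrite e eqxx in ne.
Qed.

Variable K : fieldType.

Lemma Temb_mpolyX l (mu : 'X_{1..ml l}) :
  @Temb K n ml l 'X_[mu] = 'X_[mnm_embed l mu].
Proof.
rewrite /Temb comp_mpolyX mpolyXE_id.
under [RHS]eq_bigr do rewrite mnmE -prodrXr.
rewrite (exchange_big_dep xpredT) //=.
apply: eq_bigr => k _; rewrite tnth_map tnth_ord_tuple.
by rewrite (eq_bigl (pred1 (Tvar k))) ?big_pred1_eq // => v; rewrite /= eq_sym.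
Qed.

Lemma mpolyX_blocks (mu : 'X_{1..N}) :
  'X_[mu] = \prod_(l <- enum 'I_n) @Temb K n ml l 'X_[mnm_block l mu].
Proof.
under eq_bigr do rewrite Temb_mpolyX.
rewrite -(big_morph (fun m => ('X_[m] : {mpoly K[N]})) (@mpolyXD _ _) (@mpolyX0 _ _)).
by rewrite sum_mnm_embed_block.
Qed.

Lemma Text_supp l (G : seq 'X_{1..ml l}) f :
  Text (@monomial_ideal K (ml l) G) f ->
  forall mu, f@_mu != 0 -> @monomial_ideal K (ml l) G 'X_[mnm_block l mu].
Proof.
have hid := is_ideal_supp (J := @monomial_ideal K (ml l) G) (ideal_span_is_ideal _)
  (@mnm_blockD l).
apply: (ideal_span_min hid) => _ [g hg ->].
rewrite /Temb comp_mpolyEX big_seq; apply: (is_ideal_sum _ hid) => mu.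
rewrite mcoeff_msupp -mul_mpolyC => gnz.
have [_ _ idM] := hid; apply: idM.
rewrite -[_ \mPo _]/(@Temb K n ml l 'X_[mu]) Temb_mpolyX => m.
rewrite mcoeffX; have [<-|] := eqVneq (mnm_embed l mu) m; last by rewrite eqxx.
by rewrite mnm_embedK => _; exact: (monomial_ideal_supp hg gnz).
Qed.
End Blocks.
Arguments mnm_block {n ml} l mu.
Arguments mnm_embed {n ml} l mu.

Section LprodMembership.
Variables (K : fieldType) (n : nat) (ml : 'I_n -> nat)
  (Lg : forall l : 'I_n, nat -> seq 'X_{1..ml l}).
Local Notation N := (Tsize ml).
Local Notation L l d := (@Lideal K n ml Lg l d).

Lemma Lprod_supp (a : 'X_{1..n}) f : @Lprod K n ml Lg a f ->
  forall l mu, f@_mu != 0 -> L l (a l) 'X_[mnm_block l mu].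
Proof.
move=> hf l; have : l \in enum 'I_n by rewrite mem_enum.
rewrite /Lprod in hf; elim: (enum 'I_n) f hf => // l0 s IH f hf hl.
have hid := is_ideal_supp (J := L l (a l)) (ideal_span_is_ideal _) (@mnm_blockD n ml l).
have [_ _ idM] := hid.
apply: (ideal_span_min hid) hf => _ [x [y [hx [hy ->]]]].
have [e|ne] := eqVneq l l0; first by subst l0; rewrite mulrC; apply/idM/Text_supp.
by apply/idM/IH; move: hl; rewrite // inE (negbTE ne).
Qed.

Lemma Lprod_mpolyX (a : 'X_{1..n}) (mu : 'X_{1..N}) :
  (forall l, L l (a l) 'X_[mnm_block l mu]) -> @Lprod K n ml Lg a 'X_[mu].
Proof.
move=> h; rewrite (mpolyX_blocks K mu) /Lprod; elim: (enum 'I_n) => [|l s IH] //.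
rewrite big_cons; apply: mem_ideal_mul => //.
by apply: mem_ideal_span; exists 'X_[mnm_block l mu].
Qed.
End LprodMembership.

Section DivideByVariable.
Variables (K : fieldType) (n m : nat) (a : 'I_m -> 'X_{1..n}) (ml : 'I_n -> nat)
  (Lg : forall l : 'I_n, nat -> seq 'X_{1..ml l}).
Local Notation N := (Tsize ml).
Local Notation L l d := (@Lideal K n ml Lg l d).
Hypothesis hincl : forall (l : 'I_n) (j k : 'I_m), (a k l <= a j l)%N ->
  ideal_subset (L l (a j l)) (L l (a k l)).
Hypothesis hlin : forall (l : 'I_n) (j : 'I_m),
  has_linear_resolution (a j l) (L l (a j l)).

(* The variable is taken in block l, from the linear resolution of the
   largest L_{l,a_j(l)} with j in S'; the other blocks are untouched. *)
Lemma Lprod_divide_var (mu : 'X_{1..N}) (l : 'I_n) (j0 : 'I_m) (S' : pred 'I_m) :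
  (forall j, S' j -> a j l < a j0 l)%N -> (0 < a j0 l)%N ->
  L l (a j0 l) 'X_[mnm_block l mu] ->
  (forall j, S' j -> forall l', L l' (a j l') 'X_[mnm_block l' mu]) ->
  exists v : 'I_N, (0 < mu v)%N /\
    forall j, S' j -> @Lprod K n ml Lg (a j) 'X_[mu - U_(v)].
Proof.
move=> hlt hpos hX hS.
have hdeg := linear_resolution_mdeg (hlin l j0) hX.
case: (pickP S') => [j1 hj1 | hS0]; last first.
  have [x hx] := mdeg_gt0 (leq_trans hpos hdeg).
  by exists (Tvar x); split; [rewrite mnmE in hx | move=> j; rewrite hS0].
have [jm hjm hmax] := arg_maxnP (fun j => a j l) hj1.
have hXm : L l (a jm l) 'X_[mnm_block l mu] by apply: (hincl (ltnW (hlt _ hjm))).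
have [x [hx hx']] :=
  linear_resolution_divide (hlin l jm) (leq_trans (hlt _ hjm) hdeg) hXm.
exists (Tvar x); split; first by rewrite mnmE in hx.
move=> j hj; apply: Lprod_mpolyX => l'.
have [->|ne] := eqVneq l' l; first by rewrite mnm_block_sub1; apply: (hincl (hmax _ hj)).
by rewrite mnm_block_sub1_other //; apply: hS.
Qed.
End DivideByVariable.

Lemma mnm_sub_eq0 n (x y : 'X_{1..n}) : (x <= y)%MM -> (y - x)%MM = 0%MM -> x = y.
Proof.
move=> /mnm_lepP h /mnmP e; apply/mnmP => i; have := h i; have := e i.
by rewrite mnmBE mnm0E; lia.
Qed.

Unset Implicit Arguments.

Section Resolution.
Variables (K : fieldType) (n m : nat) (a : 'I_m -> 'X_{1..n}) (beta : nat -> nat)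
  (deg : forall i : nat, 'I_(beta i) -> 'X_{1..n})
  (lam : forall i : nat, 'M[K]_(beta i.-1, beta i)) (hm : beta 1 = m).
Local Notation D := (zn_differential deg lam).
Hypothesis hdeg0 : forall k, deg 0%N k = 0%MM.
Hypothesis hdeg1 : forall j, deg 1%N j = a (cast_ord hm j).
Hypothesis hmono : forall i k j, lam i k j != 0 -> (deg i.-1 k <= deg i j)%MM.
Hypothesis hmin : forall i k j, (1 <= i)%N -> lam i k j != 0 -> deg i.-1 k != deg i j.
Hypothesis hcx : forall i, (1 <= i)%N -> D i *m D i.+1 = 0.
Hypothesis hex : forall i (v : 'cV[{mpoly K[n]}]_(beta i)), (1 <= i)%N ->
  D i *m v = 0 -> exists w, v = D i.+1 *m w.

Fixpoint gens_under_pos (i : nat) : 'I_(beta i.+1) -> pred 'I_m :=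
  match i as i0 return 'I_(beta i0.+1) -> pred 'I_m with
  | 0 => fun j j' => j' == cast_ord hm j
  | i1.+1 => fun j j' =>
      [exists k : 'I_(beta i1.+1), (lam i1.+2 k j != 0) && gens_under_pos i1 k j']
  end.

(* The generators x^(a_j') reached from f_ij along nonzero entries of the
   differentials; L_ij is the intersection of the L_j' over them, and deg_ij
   turns out to be the lcm of their a_j'. *)
Definition gens_under (i : nat) : 'I_(beta i) -> pred 'I_m :=
  match i with 0 => fun _ => pred0 | i1.+1 => gens_under_pos i1 end.

Lemma gens_under_boundary i k j j' : lam i k j != 0 ->
  gens_under i.-1 k j' -> gens_under i j j'.
Proof.
case: i k j => [|[|i]] //= k j hk hj'.
by apply/existsP; exists k; rewrite hk.
Qed.

Lemma gens_under_le i j j' : gens_under i j j' -> (a j' <= deg i j)%MM.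
Proof.
case: i j => [//|i]; elim: i => [|i IH] j /=; first by move/eqP ->; rewrite hdeg1 lepm_refl.
by case/existsP => k /andP [/hmono hk /IH hj']; exact: lepm_trans hj' hk.
Qed.

Lemma mcoeff0_D_mul i (w : 'cV[{mpoly K[n]}]_(beta i)) k : (1 <= i)%N ->
  ((D i *m w) k 0)@_0%MM = 0.
Proof.
move=> hi; rewrite mxE raddf_sum big1 //= => t _; rewrite mxE.
have [->|ht] := eqVneq (lam i k t) 0; first by rewrite mpolyC0 !mul0r mcoeff0.
rewrite -mulrA mcoeffCM mcoeff0_mulX ?mulr0 //.
by apply: contra (hmin _ _ _ hi ht) => /eqP /(mnm_sub_eq0 (hmono _ _ _ ht)) ->.
Qed.

(* If c lies between deg_{i+2,j} and the degrees of the boundary of f_{i+2,j},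
   then x^(deg - c) divides the j-th column of D_{i+2}; exactness turns the
   quotient column into a boundary, which contradicts minimality unless
   deg_{i+2,j} = c. *)
Lemma deg_eq_of_boundary_le i (j : 'I_(beta i.+2)) (c : 'X_{1..n}) :
  (c <= deg i.+2 j)%MM -> (forall k, lam i.+2 k j != 0 -> (deg i.+1 k <= c)%MM) ->
  deg i.+2 j = c.
Proof.
set b := deg i.+2 j => cb dk; apply/eqP; apply: contraT => nbc.
have e0 : (b - c)%MM != 0%MM by apply: contra nbc => /eqP /(mnm_sub_eq0 cb) ->.
pose z : 'cV[{mpoly K[n]}]_(beta i.+1) :=
  \col_k ((lam i.+2 k j)%:MP * 'X_[c - deg i.+1 k]).
have colj k : D i.+2 k j = 'X_[b - c] * z k 0.
  rewrite !mxE; have [->|hk] := eqVneq (lam i.+2 k j) 0.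
    by rewrite mpolyC0 !mul0r mulr0.
  rewrite mulrCA -mpolyXD; congr (_ * 'X_[_]); apply/mnmP => l.
  move/mnm_lepP: (dk _ hk) => /(_ l); move/mnm_lepP: cb => /(_ l).
  by rewrite !(mnmBE, mnmDE) /b /=; lia.
have Dz : D i.+1 *m z = 0.
  apply/matrixP => t u; rewrite [u]ord1 !mxE.
  move/matrixP: (hcx i.+1 isT) => /(_ t j); rewrite !mxE => h.
  have : 'X_[b - c] * \sum_k D i.+1 t k * z k 0 = 0.
    by rewrite -[RHS]h mulr_sumr; apply: eq_bigr => k _; rewrite colj mulrCA.
  by move/eqP; rewrite mulf_eq0 (negbTE (mpolyX_neq0 _ _)) => /eqP.
have [w zw] := hex i.+1 z isT Dz.
pose v : 'cV[{mpoly K[n]}]_(beta i.+2) := \col_t ((t == j)%:R - 'X_[b - c] * w t 0).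
have Dv : D i.+2 *m v = 0.
  apply/matrixP => k u; rewrite [u]ord1 !mxE.
  under eq_bigr do rewrite [v _ _]mxE mulrBr.
  rewrite sumrB (bigD1 j) //= eqxx mulr1 big1 => [|t /negbTE ->]; last by rewrite mulr0.
  rewrite addr0 colj zw mxE mulr_sumr; apply/eqP; rewrite subr_eq0; apply/eqP.
  by apply: eq_bigr => t _; rewrite mulrCA.
have [w' vw] := hex i.+2 v isT Dv.
have := mcoeff0_D_mul i.+3 w' j isT.
rewrite -vw mxE eqxx mcoeffB mcoeff0_mulX // mcoeff1 eqxx subr0 => /eqP.
by rewrite oner_eq0.
Qed.

Lemma deg_lcm i (j : 'I_(beta i)) l :
  deg i j l = (\max_(j' | gens_under i j j') a j' l)%N.
Proof.
case: i j => [|i] j /=; first by rewrite hdeg0 mnm0E big_pred0.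
elim: i j l => [|i IH] j l /=; first by rewrite (big_pred1 (cast_ord hm j)) ?hdeg1.
set c : 'X_{1..n} := [multinom (\max_(j' | gens_under i.+2 j j') a j' l)%N | l < n].
suff -> : deg i.+2 j = c by rewrite mnmE.
apply: deg_eq_of_boundary_le => [|k hk]; apply/mnm_lepP => l'; rewrite mnmE.
  by apply/bigmax_leqP => j' /gens_under_le /mnm_lepP.
rewrite IH; apply/bigmax_leqP => j' hj'.
by apply: leq_bigmax_cond; apply: (gens_under_boundary i.+2 k).
Qed.

Variables (ml : 'I_n -> nat) (Lg : forall l : 'I_n, nat -> seq 'X_{1..ml l}).
Local Notation N := (Tsize ml).
Local Notation L l d := (@Lideal K n ml Lg l d).
Local Notation Lc i := (@Lcx K n ml Lg beta deg lam i).
Hypothesis hincl : forall (l : 'I_n) (j k : 'I_m), (a k l <= a j l)%N ->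
  ideal_subset (L l (a j l)) (L l (a k l)).
Hypothesis hlin : forall (l : 'I_n) (j : 'I_m),
  has_linear_resolution (a j l) (L l (a j l)).

Lemma Lcx_gens_under i j f :
  Lc i j f <-> forall j', gens_under i j j' -> @Lprod K n ml Lg (a j') f.
Proof.
case: i j => [//|i] j /=.
elim: i j f => [|i IH] j f /=.
  by rewrite hdeg1; split => [h j' /eqP -> // | h]; apply: h.
split => [h j' /existsP [k /andP [hk hj']] | h k hk]; first by move/IH: (h k hk); apply.
by apply/IH => j' hj'; apply: h; apply/existsP; exists k; rewrite hk.
Qed.

Lemma Lcx_divide_var i j k f mu : lam i.+1 k j != 0 -> Lc i.+1 j f -> f@_mu != 0 ->
  exists v : 'I_N, (0 < mu v)%N /\ Lc i k 'X_[mu - U_(v)].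
Proof.
move=> hk hf hmu.
have [l hl] : exists l, (deg i k l < deg i.+1 j l)%N.
  have /mnm_lepP hle := hmono i.+1 k j hk.
  apply/existsP; move: (hmin i.+1 k j isT hk); apply: contraR.
  rewrite negb_exists => /forallP hge; apply/eqP/mnmP => l.
  by apply/eqP; rewrite eqn_leq hle leqNgt hge.
rewrite !deg_lcm in hl.
have hblk j' : gens_under i.+1 j j' -> forall l', L l' (a j' l') 'X_[mnm_block l' mu].
  by move=> hj' l'; apply: Lprod_supp hmu; apply: (proj1 (Lcx_gens_under _ _ _) hf).
have [j1 hj1] : exists j1, gens_under i.+1 j j1.
  case: (pickP (gens_under i.+1 j)) => [j1 ?|hS0]; first by exists j1.
  by rewrite (big_pred0 _ _ _ _ hS0) in hl.
have [jm hjm hmax] := arg_maxnP (fun j' => a j' l) hj1.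
have hSmax : (\max_(j' | gens_under i.+1 j j') a j' l <= a jm l)%N.
  exact/bigmax_leqP.
have hlt j' : gens_under i k j' -> (a j' l < a jm l)%N.
  by move=> hj'; apply: leq_ltn_trans (leq_bigmax_cond _ hj') (leq_trans hl hSmax).
have [v [hv hL]] := Lprod_divide_var hincl hlin hlt
  (leq_ltn_trans (leq0n _) (leq_trans hl hSmax)) (hblk _ hjm l)
  (fun j' hj' => hblk j' (gens_under_boundary i.+1 k j j' hk hj')).
by exists v; split => //; apply/Lcx_gens_under.
Qed.
End Resolution.

Theorem lemma2p4
  (K : fieldType) (n m : nat) (a : 'I_m -> 'X_{1..n})
  (hG : forall j k : 'I_m, j != k -> ~~ (a j <= a k)%MM)
  (hIS : ~ @monomial_ideal K n [seq a j | j <- enum 'I_m] 1)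
  (p : nat) (beta : nat -> nat)
  (deg : forall i : nat, 'I_(beta i) -> 'X_{1..n})
  (lam : forall i : nat, 'M[K]_(beta i.-1, beta i))
  (hres : @is_min_zn_resolution K n m a p beta deg lam)
  (ml : 'I_n -> nat)
  (Lg : forall l : 'I_n, nat -> seq 'X_{1..ml l})
  (hincl : forall (l : 'I_n) (j k : 'I_m), (a k l <= a j l)%N ->
     ideal_subset (@Lideal K n ml Lg l (a j l)) (@Lideal K n ml Lg l (a k l)))
  (hlin : forall (l : 'I_n) (j : 'I_m),
     @has_linear_resolution K (ml l) (a j l) (@Lideal K n ml Lg l (a j l))) :
  forall i : nat, (1 <= i <= p)%N ->
  forall u : 'I_(beta i) -> {mpoly K[Tsize ml]},
    (forall j, @Lcx K n ml Lg beta deg lam i j (u j)) ->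
  forall k : 'I_(beta i.-1),
    ideal_mul (@graded_max K (Tsize ml))
              (@Lcx K n ml Lg beta deg lam i.-1 k)
              (\sum_(j < beta i) (lam i k j)%:MP_[Tsize ml] * u j).
Proof.
move=> [//|i] _ u hu k.
case: hres => [[_ hdeg0] [[hm hdeg1] [_ [hmono [hmin [hcx [hex _]]]]]]].
have [id0 _ idM] := ideal_span_is_ideal
  (fun f => exists x y, graded_max x /\ @Lcx K n ml Lg beta deg lam i k y /\ f = x * y).
apply: is_ideal_sum (ideal_span_is_ideal _) _ => j _.
have [->|hk] := eqVneq (lam i.+1 k j) 0; first by rewrite mpolyC0 mul0r; exact: id0.
apply/idM/ideal_mul_graded_max => mu.
exact: (Lcx_divide_var K n m a beta deg lam hm hdeg0 hdeg1 hmono hmin hcx hex ml Lg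
  hincl hlin i j k (u j) mu hk (hu j)).
Qed.
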